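(* Consider the system $x[k+1]=Ax[k]+w[k]$, $y[k]=Cx[k]+v[k]$ with $A=\mathrm{diag}(\lambda_1,0,\dots,0)\in\mathbb{R}^{n\times n}$ where $0<|\lambda_1|<1$, a single-row measurement matrix $C=[1\ \gamma]$ with $\gamma\in\mathbb{R}^{1\times(n-1)}$, process noise covariance $W=I_{n\times n}$ and measurement noise covariance $V=\mathbf{0}$. Let $\Sigma$ be the steady-state a priori error covariance of the Kalman filter. Then, with $\alpha^2:=\lVert\gamma\rVert_2^2$, $$\Sigma_{11}=\frac{1+\alpha^2\lambda_1^2-\alpha^2+\sqrt{(\alpha^2-\alpha^2\lambda_1^2-1)^2+4\alpha^2}}{2}.$$ Moreover, viewing $\Sigma_{11}$ as a function $\Sigma_{11}(\alpha^2)$ of $\alpha^2\in\mathbb{R}_{\ge0}$, it is strictly increasing, with $\Sigma_{11}(0)=1$ and $\lim_{\alpha\to\infty}\Sigma_{11}(\alpha^2)=\frac{1}{1-\lambda_1^2}$.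
   Context: Here $w[k]$ and $v[k]$ are uncorrelated zero-mean white Gaussian noise processes with covariances $W$ and $V$. The steady-state a priori error covariance $\Sigma$ is the limit as $k\to\infty$ of the Kalman filter's a priori error covariance $\Sigma_{k|k-1}$; it satisfies $\Sigma=A\Sigma A^T+W-A\Sigma C^T(C\Sigma C^T+V)^{-1}C\Sigma A^T$, with the inverse interpreted as a pseudo-inverse when singular. *)

From HB Require Import structures.
From mathcomp Require Import all_boot all_order all_algebra.
From mathcomp Require Import all_classical all_reals all_analysis.
Set Implicit Arguments. Unset Strict Implicit. Unset Printing Implicit Defensive.
Import Order.TTheory GRing.Theory Num.Theory.
Import numFieldNormedType.Exports.
Local Open Scope classical_set_scope.
Local Open Scope ring_scope.

(* Moore-Penrose pseudo-inverse of a 1x1 matrix [s]: [1/s] if s <> 0, [0]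
   otherwise (in MathComp, 0^-1 = 0 in a field). *)
Definition pinv1 (R : realType) (M : 'M[R]_1) : 'M[R]_1 := ((M 0 0)^-1)%:M.

Definition riccati (R : realType) (m : nat) (A W : 'M[R]_m) (C : 'rV[R]_m)
  (V : 'M[R]_1) (S : 'M[R]_m) : 'M[R]_m :=
  A *m S *m A^T + W
  - A *m S *m C^T *m pinv1 (C *m S *m C^T + V) *m C *m S *m A^T.

Definition psd (R : realType) (m : nat) (S : 'M[R]_m) : Prop :=
  S^T = S /\ forall x : 'rV[R]_m, 0 <= (x *m S *m x^T) 0 0.

Definition steady_state (R : realType) (m : nat) (A W : 'M[R]_m)
  (C : 'rV[R]_m) (V : 'M[R]_1) (S0 Sig : 'M[R]_m) : Prop :=
  forall i j, (fun k : nat => (iter k (riccati A W C V) S0) i j) @ \oo --> Sig i j.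

(* The system matrices of the lemma, with state dimension 1 + n. *)
Definition Amat (R : realType) (n : nat) (l : R) : 'M[R]_(1 + n) :=
  block_mx (l%:M : 'M[R]_1) 0 0 0.
Definition Cmat (R : realType) (n : nat) (g : 'rV[R]_n) : 'rV[R]_(1 + n) :=
  row_mx (1 : 'M[R]_1) g.

(* Closed form of Sigma_11 as a function of a = alpha^2. *)
Definition sigma11 (R : realType) (l a : R) : R :=
  (1 + a * l ^+ 2 - a
   + Num.sqrt ((a - a * l ^+ 2 - 1) ^+ 2 + 4 * a)) / 2.

(* The Riccati map with A = l e1 e1^T, W = I and V = 0 sends any S to
   diag(1 + l^2 v, 1, ..., 1), where v is the Schur complement of the Gram
   matrix of e1 and C under S, nonnegative when S is psd.  On the matrices
   diag(s, 1, ..., 1) it acts on s as f(s) = 1 + l^2 s a / (s + a), with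
   a = |gamma|^2, which is an l^2-contraction of [0, +oo) fixing the larger
   root sigma11 l a of t^2 - (1 + a l^2 - a) t - a.  Monotonicity in a and the
   limit a -> +oo come from writing this root equation as
   t^2 - t = a (1 - (1 - l^2) t), where (1 - l^2) t < 1. *)

From HB Require Import structures.
From mathcomp Require Import all_boot all_order all_algebra.
From mathcomp Require Import all_classical all_reals all_analysis.
From mathcomp Require Import ring lra.
Import Order.TTheory GRing.Theory Num.Theory.
Import numFieldNormedType.Exports.
Set Implicit Arguments. Unset Strict Implicit. Unset Printing Implicit Defensive.
Local Open Scope classical_set_scope.
Local Open Scope ring_scope.

Section QuadraticForms.
Variable R : realType.

Definition qform m (S : 'M[R]_m) (x y : 'rV[R]_m) : R := (x *m S *m y^T) 0 0.

(* Conditional variance of x X given y X for X with covariance S; the inverse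
   is the pseudo-inverse since 0^-1 = 0. *)
Definition cond_var m (S : 'M[R]_m) (x y : 'rV[R]_m) : R :=
  qform S x x - qform S x y * (qform S y y)^-1 * qform S y x.

Lemma qformC m (S : 'M[R]_m) x y : S^T = S -> qform S x y = qform S y x.
Proof.
move=> St; rewrite /qform.
have -> : y *m S *m x^T = (x *m S *m y^T)^T by rewrite !trmx_mul trmxK St mulmxA.
by rewrite [RHS]mxE.
Qed.

Lemma qform_sub m (S : 'M[R]_m) x y (u v : R) :
  qform S (u *: x - v *: y) (u *: x - v *: y) =
  u ^+ 2 * qform S x x - u * v * (qform S x y + qform S y x) + v ^+ 2 * qform S y y.
Proof.
rewrite /qform [(_ - _)^T]linearB /= ![(_ *: _)^T]linearZ /=.
rewrite !(mulmxBl, mulmxBr) -!scalemxAl -!scalemxAr.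
set xx := x *m S *m x^T; set xy := x *m S *m y^T.
set yx := y *m S *m x^T; set yy := y *m S *m y^T.
by rewrite !mxE; ring.
Qed.

Lemma qform_rank1_update m (e x y : 'rV[R]_m) (c : R) :
  qform (1%:M + c *: (e^T *m e)) x y =
  (x *m y^T) 0 0 + c * ((x *m e^T) 0 0 * (e *m y^T) 0 0).
Proof.
rewrite /qform mulmxDr mulmx1 mulmxDl -!scalemxAr -scalemxAl.
have -> : x *m (e^T *m e) *m y^T = (x *m e^T) *m (e *m y^T) by rewrite !mulmxA.
rewrite [in LHS](mx11_scalar (x *m e^T)) [in LHS](mx11_scalar (e *m y^T)) -scalar_mxM.
set xy := x *m y^T; set xe := x *m e^T; set ey := e *m y^T.
by rewrite !mxE mulr1n.
Qed.

Lemma cond_var_ge0 m (S : 'M[R]_m) x y : psd S -> 0 <= cond_var S x y.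
Proof.
move=> [St S_ge0]; rewrite /cond_var (qformC y x St).
have p_ge0 : 0 <= qform S x x := S_ge0 x.
have [c0|c_neq0] := eqVneq (qform S y y) 0; first by rewrite c0 invr0 mulr0 mul0r subr0.
have c_gt0 : 0 < qform S y y by rewrite lt0r c_neq0 S_ge0.
set p := qform S x x; set b := qform S x y; set c := qform S y y in c_neq0 c_gt0 *.
have : 0 <= qform S (c *: x - b *: y) (c *: x - b *: y) := S_ge0 _.
rewrite qform_sub (qformC y x St) -/p -/b -/c => quad_ge0.
have -> : p - b * c^-1 * b = (c * p - b ^+ 2) / c by field.
apply: divr_ge0; last exact: ltW.
by rewrite -(pmulr_rge0 _ c_gt0); nra.
Qed.

Lemma riccati_rank1 m (e C : 'rV[R]_m) (l : R) (S : 'M[R]_m) :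
  riccati (l *: (e^T *m e)) 1%:M C 0 S = 1%:M + (l ^+ 2 * cond_var S e C) *: (e^T *m e).
Proof.
rewrite /riccati /pinv1 addr0; set A := l *: (e^T *m e).
have -> : A^T = A by rewrite linearZ /= trmx_mul trmxK.
have sandwich (M : 'M[R]_m) : A *m M *m A = (l ^+ 2 * (e *m M *m e^T) 0 0) *: (e^T *m e).
  rewrite -scalemxAl -scalemxAr -scalemxAl scalerA -expr2 -scalerA; congr (_ *: _).
  have -> : e^T *m e *m M *m (e^T *m e) = e^T *m (e *m M *m e^T) *m e by rewrite !mulmxA.
  by rewrite [in LHS](mx11_scalar (e *m M *m e^T)) mul_mx_scalar -scalemxAl.
set P := (_^-1)%:M.
have -> : A *m S *m C^T *m P *m C *m S *m A = A *m (S *m C^T *m P *m C *m S) *m A.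
  by rewrite !mulmxA.
rewrite !sandwich.
have -> : e *m (S *m C^T *m P *m C *m S) *m e^T = (e *m S *m C^T) *m P *m (C *m S *m e^T).
  by rewrite !mulmxA.
rewrite [e *m S *m C^T]mx11_scalar [C *m S *m e^T]mx11_scalar -!scalar_mxM.
rewrite [(_%:M) 0 0]mxE mulr1n.
by rewrite /cond_var /qform mulrBr scalerBl addrA [_ + 1%:M]addrC.
Qed.

End QuadraticForms.

Lemma iter_contraction_cvg (R : realType) (P : R -> Prop) (f : R -> R) (q t s : R) :
  0 <= q < 1 -> (forall x, P x -> P (f x)) ->
  (forall x, P x -> `|f x - t| <= q * `|x - t|) -> P s ->
  iter k f s @[k --> \oo] --> t.
Proof.
move=> /andP[q_ge0 q_lt1] fP f_contr Ps.
have P_iter k : P (iter k f s) by elim: k => //= k /fP.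
have dist_le k : `|iter k f s - t| <= q ^+ k * `|s - t|.
  elim: k => [|k IHk]; first by rewrite mul1r.
  rewrite iterS exprS -mulrA (le_trans (f_contr _ (P_iter k))) // ler_wpM2l //.
have geo : q ^+ k * `|s - t| @[k --> \oo] --> 0.
  by rewrite -(mul0r `|s - t|); apply: cvgMl; apply: cvg_expr; rewrite ger0_norm.
apply/subr_cvg0; apply: norm_cvg0; apply: (squeeze_cvgr _ (cvg_cst 0) geo).
by near=> k; rewrite normr_ge0 /= dist_le.
Unshelve. all: end_near.
Qed.

Section ScalarRiccati.
Variable R : realType.
Implicit Types l a s t x : R.

Definition riccati_scalar l a s : R := 1 + l ^+ 2 * (s * a / (s + a)).

Lemma riccati_scalar_ge1 l a s : 0 <= a -> 0 <= s -> 1 <= riccati_scalar l a s.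
Proof.
move=> a_ge0 s_ge0; rewrite /riccati_scalar lerDl.
by rewrite mulr_ge0 ?sqr_ge0 ?divr_ge0 ?mulr_ge0 ?addr_ge0.
Qed.

Lemma riccati_scalar_lipschitz l a s t : 0 <= a -> 0 <= s -> 0 <= t ->
  `|riccati_scalar l a s - riccati_scalar l a t| <= l ^+ 2 * `|s - t|.
Proof.
move=> a_ge0 s_ge0 t_ge0; have [->|a_neq0] := eqVneq a 0.
  by rewrite /riccati_scalar !(mulr0, mul0r, addr0, subrr) normr0 mulr_ge0 ?sqr_ge0.
have a_gt0 : 0 < a by rewrite lt0r a_neq0.
have sa_gt0 : 0 < s + a by rewrite ltr_wpDl.
have ta_gt0 : 0 < t + a by rewrite ltr_wpDl.
have -> : riccati_scalar l a s - riccati_scalar l a t =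
    l ^+ 2 * (a ^+ 2 / ((s + a) * (t + a))) * (s - t).
  by rewrite /riccati_scalar; field; rewrite !lt0r_neq0.
have frac_ge0 : 0 <= a ^+ 2 / ((s + a) * (t + a)) by rewrite divr_ge0 ?sqr_ge0 ?mulr_ge0 ?ltW.
rewrite normrM ler_wpM2r // normrM !ger0_norm ?sqr_ge0 // ler_piMr ?sqr_ge0 //.
by rewrite ler_pdivrMr ?mulr_gt0 // mul1r expr2; nra.
Qed.

Lemma sigma11_root l a : 0 <= a ->
  sigma11 l a ^+ 2 - (1 + a * l ^+ 2 - a) * sigma11 l a - a = 0.
Proof.
move=> a_ge0; rewrite /sigma11.
set D := _ + 4 * a; have D_ge0 : 0 <= D by rewrite addr_ge0 ?sqr_ge0 ?mulr_ge0.
set r := Num.sqrt D; have r2 : r ^+ 2 = D := sqr_sqrtr D_ge0.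
have -> : ((1 + a * l ^+ 2 - a + r) / 2) ^+ 2 - (1 + a * l ^+ 2 - a) * ((1 + a * l ^+ 2 - a + r) / 2) - a
    = (r ^+ 2 - D) / 4 by rewrite /D; field.
by rewrite r2 subrr mul0r.
Qed.

Lemma sigma11_larger_root l a : 1 + a * l ^+ 2 - a <= 2 * sigma11 l a.
Proof. by rewrite /sigma11 [2 * _]mulrC mulfVK ?pnatr_eq0 // lerDl sqrtr_ge0. Qed.

Lemma sigma11_ge1 l a : 0 <= a -> 1 <= sigma11 l a.
Proof.
move=> a_ge0; have := sigma11_root l a_ge0; have := sigma11_larger_root l a.
have : 0 <= a * l ^+ 2 by rewrite mulr_ge0 ?sqr_ge0.
set t := sigma11 l a; set L := l ^+ 2; nra.
Qed.

Lemma sigma11_lt_inv l a : 0 < l ^+ 2 < 1 -> 0 <= a -> (1 - l ^+ 2) * sigma11 l a < 1.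
Proof.
move=> /andP[L_gt0 L_lt1] a_ge0.
have := sigma11_root l a_ge0; have := sigma11_larger_root l a; have := sigma11_ge1 l a_ge0.
set t := sigma11 l a; set L := l ^+ 2 in L_gt0 L_lt1 *; nra.
Qed.

Lemma sigma11_fixed l a : 0 <= a -> riccati_scalar l a (sigma11 l a) = sigma11 l a.
Proof.
move=> a_ge0; have root := sigma11_root l a_ge0; have t_ge1 := sigma11_ge1 l a_ge0.
set t := sigma11 l a in root t_ge1 *.
have ta_neq0 : t + a != 0 by rewrite lt0r_neq0 // ltr_wpDr // (lt_le_trans ltr01).
have -> : riccati_scalar l a t = t - (t ^+ 2 - (1 + a * l ^+ 2 - a) * t - a) / (t + a).
  by rewrite /riccati_scalar; field.
by rewrite root mul0r subr0.
Qed.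

Lemma sigma11_0 l : sigma11 l 0 = 1.
Proof.
have := sigma11_root l (lexx 0); have := sigma11_ge1 l (lexx 0).
set t := sigma11 l 0; rewrite !(mul0r, addr0, subr0, mul1r) => t_ge1 root.
by apply/eqP; rewrite eq_le t_ge1 andbT; nra.
Qed.

Lemma sigma11_increasing l a b : 0 < l ^+ 2 < 1 -> 0 <= a -> a < b ->
  sigma11 l a < sigma11 l b.
Proof.
move=> L_bounds a_ge0 a_lt_b; have b_ge0 : 0 <= b by rewrite (le_trans a_ge0) ?ltW.
have := sigma11_root l a_ge0; have := sigma11_ge1 l a_ge0; have := sigma11_lt_inv L_bounds a_ge0.
have := sigma11_root l b_ge0; have := sigma11_ge1 l b_ge0; have := sigma11_lt_inv L_bounds b_ge0.
have /andP[L_gt0 L_lt1] := L_bounds.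
set sa := sigma11 l a; set sb := sigma11 l b; set L := l ^+ 2 in L_gt0 L_lt1 *.
move=> mb_lt1 sb_ge1 root_b ma_lt1 sa_ge1 root_a.
rewrite ltNge; apply/negP => sb_le_sa.
have : 0 <= (sa - sb) * (sa + sb - 1) by apply: mulr_ge0; lra.
have : 0 <= a * ((1 - L) * (sa - sb)) by apply: mulr_ge0 => //; apply: mulr_ge0; lra.
have : 0 < (b - a) * (1 - (1 - L) * sb) by apply: mulr_gt0; lra.
nra.
Qed.

Lemma sigma11_gap l x : 0 < l ^+ 2 < 1 -> 0 < x ->
  0 <= (1 - l ^+ 2)^-1 - sigma11 l x <= ((1 - l ^+ 2) ^+ 3 * x)^-1.
Proof.
move=> L_bounds x_gt0; have x_ge0 := ltW x_gt0.
have := sigma11_root l x_ge0; have := sigma11_ge1 l x_ge0; have := sigma11_lt_inv L_bounds x_ge0.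
have /andP[_ L_lt1] := L_bounds.
set t := sigma11 l x; set m := 1 - l ^+ 2 => mt_lt1 t_ge1 root.
have m_gt0 : 0 < m by rewrite subr_gt0.
have -> : m^-1 - t = (1 - m * t) / m by field; rewrite lt0r_neq0.
have key : (1 - m * t) * (m ^+ 2 * x) < 1.
  have -> : (1 - m * t) * (m ^+ 2 * x) = m ^+ 2 * (t ^+ 2 - t).
    by rewrite -[t ^+ 2 - t]subr0 -root /m; ring.
  have mt_ge0 : 0 <= m * t by apply: mulr_ge0; lra.
  rewrite mulrBr -exprMn; nra.
apply/andP; split; first by rewrite divr_ge0 ?subr_ge0 ?ltW.
have -> : (1 - m * t) / m = (1 - m * t) * (m ^+ 2 * x) / (m ^+ 3 * x).
  by field; rewrite !lt0r_neq0.
by rewrite -[X in _ <= X]mul1r ler_pM2r ?invr_gt0 ?mulr_gt0 ?exprn_gt0 // ltW.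
Qed.

Lemma sigma11_cvg l : 0 < l ^+ 2 < 1 ->
  sigma11 l x @[x --> +oo] --> (1 - l ^+ 2)^-1.
Proof.
move=> L_bounds; have /andP[_ L_lt1] := L_bounds.
set m := 1 - l ^+ 2; have m_gt0 : 0 < m by rewrite subr_gt0.
have m3_gt0 : 0 < m ^+ 3 by rewrite exprn_gt0.
apply/cvgrPdist_le => e e_gt0; near=> x.
have x_gt0 : 0 < x by near: x; apply: nbhs_pinfty_gt; rewrite num_real.
have /andP[gap_ge0 gap_le] := sigma11_gap L_bounds x_gt0.
rewrite ger0_norm // (le_trans gap_le) // -[_^-1]mul1r ler_pdivrMr ?mulr_gt0 //.
have : (m ^+ 3 * e)^-1 < x by near: x; apply: nbhs_pinfty_gt; rewrite num_real.
by rewrite -[_^-1]mul1r ltr_pdivrMr ?mulr_gt0 // -/m; lra.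
Unshelve. all: end_near.
Qed.

End ScalarRiccati.

Section KalmanSystem.
Variables (R : realType) (n : nat) (g : 'rV[R]_n).

Local Notation e0 := (delta_mx 0 0 : 'rV[R]_(1 + n)).

Lemma outer_e0 : e0^T *m e0 = pid_mx 1.
Proof.
rewrite trmx_delta mul_delta_mx; apply/matrixP => i j; rewrite !mxE.
by case: i j => [[|i] ?] [[|j] ?] //=; rewrite andbF.
Qed.

Lemma Amat_rank1 (l : R) : Amat n l = l *: (e0^T *m e0).
Proof. by rewrite outer_e0 pid_mx_block scale_block_mx !scaler0 scalemx1. Qed.

Local Notation C := (Cmat g).
Local Notation a := (\sum_(j < n) g 0 j ^+ 2).

(* diag(s, 1, ..., 1): from the first step on, every a priori covariance has
   this shape. *)
Definition cov_mx (s : R) : 'M[R]_(1 + n) := 1%:M + (s - 1) *: (e0^T *m e0).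

Lemma cov_mx00 s : cov_mx s 0 0 = s.
Proof. by rewrite /cov_mx outer_e0 !mxE /= mulr1 addrC subrK. Qed.

Lemma mul_tr_e0 (x : 'rV[R]_(1 + n)) : (x *m e0^T) 0 0 = x 0 0.
Proof. by rewrite trmx_delta -colE mxE. Qed.

Lemma mul_e0_tr (x : 'rV[R]_(1 + n)) : (e0 *m x^T) 0 0 = x 0 0.
Proof. by rewrite -rowE !mxE. Qed.

Lemma Cmat00 : C 0 0 = 1.
Proof.
have -> : (0 : 'I_(1 + n)) = lshift n 0 by apply/val_inj.
by rewrite /Cmat row_mxEl mxE.
Qed.

Lemma Cmat_sqnorm : (C *m C^T) 0 0 = 1 + a.
Proof.
rewrite /Cmat tr_row_mx mul_row_col trmx1 mulmx1 mxE [X in X + _]mxE mulr1n.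
by congr (_ + _); rewrite mxE; apply: eq_bigr => j _; rewrite mxE expr2.
Qed.

Lemma sum_sqr_ge0 : 0 <= a.
Proof. by apply: sumr_ge0 => j _; apply: sqr_ge0. Qed.

Lemma cond_var_cov_mx s : 0 <= s -> cond_var (cov_mx s) e0 C = s * a / (s + a).
Proof.
move=> s_ge0; have a_ge0 := sum_sqr_ge0.
rewrite /cond_var /cov_mx !qform_rank1_update !mul_tr_e0 !mul_e0_tr Cmat00 Cmat_sqnorm.
rewrite !mxE /= !mulr1.
have -> : 1 + a + (s - 1) = s + a by rewrite addrC addrA subrK addrC.
rewrite [1 + _]addrC subrK.
have [sa0|sa_neq0] := eqVneq (s + a) 0; last by field.
have s0 : s = 0 by apply/le_anti; rewrite s_ge0 -sa0 lerDl a_ge0.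
by rewrite s0 !mul0r subrr.
Qed.

Lemma riccati_psd l S : riccati (Amat n l) 1%:M C 0 S = cov_mx (1 + l ^+ 2 * cond_var S e0 C).
Proof. by rewrite Amat_rank1 riccati_rank1 /cov_mx [1 + _]addrC addrK. Qed.

Lemma riccati_cov_mx l s : 0 <= s ->
  riccati (Amat n l) 1%:M C 0 (cov_mx s) = cov_mx (riccati_scalar l a s).
Proof. by move=> s_ge0; rewrite riccati_psd cond_var_cov_mx. Qed.

Lemma steady_state_cov00 l S0 Sig : l ^+ 2 < 1 -> psd S0 ->
  steady_state (Amat n l) 1%:M C 0 S0 Sig -> Sig 0 0 = sigma11 l a.
Proof.
move=> L_lt1 S0_psd S_lim; have a_ge0 := sum_sqr_ge0.
set f := riccati_scalar l a; set ric := riccati (Amat n l) 1%:M C 0.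
have f_ge0 x : 0 <= x -> 0 <= f x by move=> /(riccati_scalar_ge1 l a_ge0); apply: le_trans.
set s1 := 1 + l ^+ 2 * cond_var S0 e0 C.
have s1_ge0 : 0 <= s1 by rewrite (le_trans ler01) // lerDl mulr_ge0 ?sqr_ge0 ?cond_var_ge0.
have iterE k : iter k.+1 ric S0 = cov_mx (iter k f s1).
  elim: k => [|k IHk]; first exact: riccati_psd.
  rewrite iterS IHk /ric riccati_cov_mx //; elim: k {IHk} => //= k; exact: f_ge0.
have f_contr x : 0 <= x -> `|f x - sigma11 l a| <= l ^+ 2 * `|x - sigma11 l a|.
  move=> x_ge0; rewrite -{1}(sigma11_fixed l a_ge0).
  by apply: riccati_scalar_lipschitz; rewrite // (le_trans ler01) ?sigma11_ge1.
have scalar_cvg : iter k f s1 @[k --> \oo] --> sigma11 l a.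
  by apply: (iter_contraction_cvg _ f_ge0 f_contr) => //; rewrite sqr_ge0.
have entry_cvg : (fun k => iter k ric S0 0 0) @ \oo --> sigma11 l a.
  rewrite -cvg_shiftS; under eq_fun do rewrite iterE cov_mx00; exact: scalar_cvg.
exact: cvg_unique (S_lim 0 0) entry_cvg.
Qed.

End KalmanSystem.

Theorem lemma3 (R : realType) (n : nat) (l : R) (g : 'rV[R]_n) :
  0 < `|l| < 1 ->
  (forall S0 Sig : 'M[R]_(1 + n), psd S0 ->
     steady_state (Amat n l) 1%:M (Cmat g) 0 S0 Sig ->
     Sig ord0 ord0 = sigma11 l (\sum_(j < n) g 0 j ^+ 2))
  /\ (forall a b : R, 0 <= a -> a < b -> sigma11 l a < sigma11 l b)
  /\ sigma11 l 0 = 1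
  /\ (sigma11 l x @[x --> +oo] --> (1 - l ^+ 2)^-1).
Proof.
move=> /andP[l_gt0 l_lt1].
have L_bounds : 0 < l ^+ 2 < 1.
  by rewrite -(real_normK (num_real l)) exprn_gt0 // expr_lt1.
have /andP[_ L_lt1] := L_bounds.
split; first by move=> S0 Sig; exact: steady_state_cov00 L_lt1.
split; first by move=> a b; exact: sigma11_increasing.
by split; [exact: sigma11_0 | exact: sigma11_cvg].
Qed.
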